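(* $\gamma(3)=8$. In particular, the word $abcabacb$ (over three distinct letters $a,b,c$) is s-primitive, and every word of length $9$ over a ternary alphabet is not s-primitive.
   Context: For words $C,S$, $C$ is an \emph{s-cover} of $S$ if for every position $i$ of $S$ there exist indices $j_0<\dots<j_{|C|-1}$ with $S[j_t]=C[t]$ for all $t$ and $i\in\{j_0,\dots,j_{|C|-1}\}$. An s-cover $C$ of $S$ is \emph{non-trivial} if $|C|<|S|$; a word is \emph{s-primitive} if it has no non-trivial s-cover. $\gamma(k)$ is the maximum length of an s-primitive word over an alphabet of size $k$. *)

From mathcomp Require Import all_boot.
Set Implicit Arguments. Unset Strict Implicit. Unset Printing Implicit Defensive.

Section SCover.
Variable T : eqType.

Definition occurrence (C S : seq T) (j : nat -> nat) : Prop :=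
  (forall t, t.+1 < size C -> j t < j t.+1) /\
  (forall t, t < size C -> j t < size S /\ onth S (j t) = onth C t).

Definition s_cover (C S : seq T) : Prop :=
  forall i, i < size S ->
    exists j, occurrence C S j /\ exists2 t, t < size C & j t = i.

Definition nontrivial_s_cover (C S : seq T) : Prop :=
  s_cover C S /\ size C < size S.

Definition s_primitive (S : seq T) : Prop :=
  ~ exists C, nontrivial_s_cover C S.
End SCover.

Definition gamma_is (k n : nat) : Prop :=
  (exists w : seq 'I_k, s_primitive w /\ size w = n) /\
  (forall w : seq 'I_k, s_primitive w -> size w <= n).

From mathcomp Require Import all_boot zify.
Set Implicit Arguments. Unset Strict Implicit. Unset Printing Implicit Defensive.

(* Position i of S lies on an occurrence of C through letter t exactly when
   C[t] = S[i], C[..t) is a subsequence of S[..i) and C(t..] one of S(i..].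
   Hence "C s-covers S" is decidable, and s-primitivity of S is a finite check
   over the subsequences of S.  A word containing a square xx is covered by the
   word with one x deleted, s-primitivity is preserved by injective renaming of
   letters, and a nontrivial cover of a prefix extends to the whole word; so it
   suffices to check abcabacb and the 3 * 2^8 square-free ternary words of
   length 9 by computation. *)

Section Occurrence.
Variable T : eqType.
Implicit Types (C S s : seq T) (x : T) (j : nat -> nat).

Lemma occurrence_mono C S j t1 t2 :
  occurrence C S j -> t1 < t2 < size C -> j t1 < j t2.
Proof.
case=> inc _ /andP[lt12 lt2].
have : {in gtn (size C) &, {homo j : u v / u < v}}.
  apply: homo_ltn_in; first exact: @ltn_trans.
    by move=> u v _ ltv w /andP[_ lt]; rewrite !inE in ltv *; exact: ltn_trans lt ltv.
  by move=> u _; rewrite inE; apply: inc.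
by apply; rewrite ?inE // (ltn_trans lt12).
Qed.

Lemma occurrence_nil S j : occurrence (T:=T) [::] S j.
Proof. by split. Qed.

Lemma occurrence1 x : occurrence [:: x] [:: x] (fun=> 0).
Proof. by split=> // -[]. Qed.

Lemma occurrence_cat C1 S1 j1 C2 S2 j2 :
  occurrence C1 S1 j1 -> occurrence C2 S2 j2 ->
  occurrence (C1 ++ C2) (S1 ++ S2)
    (fun t => if t < size C1 then j1 t else size S1 + j2 (t - size C1)).
Proof.
move=> [inc1 at1] [inc2 at2]; split=> t; rewrite size_cat => ltt.
- case: (ltnP t (size C1)) => lt0; case: (ltnP t.+1 (size C1)) => lt1.
  + exact: inc1.
  + by have [+ _] := at1 t lt0; lia.
  + lia.
  + by have := inc2 (t - size C1) ltac:(lia); rewrite subSn //; lia.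
- rewrite size_cat !onth_cat; case: (ltnP t (size C1)) => lt1.
    by have [lt <-] := at1 t lt1; rewrite lt ltn_addr.
  have [lt <-] := at2 (t - size C1) ltac:(lia).
  rewrite ifN ?addKn; last by rewrite -leqNgt leq_addr.
  by split=> //; lia.
Qed.

Lemma onth_take n s i : i < n -> onth (take n s) i = onth s i.
Proof. by move=> lt; rewrite !onthE map_take nth_take. Qed.

Lemma onth_drop n s i : onth (drop n s) i = onth s (n + i).
Proof. by rewrite !onthE map_drop nth_drop. Qed.

Lemma take_onth_drop s n x : onth s n = Some x -> take n s ++ x :: drop n.+1 s = s.
Proof.
move=> sn; have lt : n < size s by rewrite -onthTE sn.
by rewrite -(onth_nth x x s n sn) -drop_nth // cat_take_drop.
Qed.

Lemma occurrence_take C S j t :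
  occurrence C S j -> t < size C -> occurrence (take t C) (take (j t) S) j.
Proof.
move=> occ ltt; have [inc at_] := occ; split=> u; rewrite size_takel ?(ltnW ltt) // => ltu.
  exact: inc (ltn_trans ltu ltt).
have ltj : j u < j t by apply: (occurrence_mono occ); rewrite ltu.
have [ltS _] := at_ t ltt; have [_ Sju] := at_ u (ltn_trans ltu ltt).
by rewrite size_takel ?(ltnW ltS) // !onth_take.
Qed.

Lemma occurrence_drop C S j t :
  occurrence C S j -> t < size C ->
  occurrence (drop t.+1 C) (drop (j t).+1 S) (fun u => j (t.+1 + u) - (j t).+1).
Proof.
move=> occ ltt; have [inc at_] := occ.
have ltj u : u < size C - t.+1 -> j t < j (t.+1 + u).
  by move=> ltu; apply: (occurrence_mono occ); lia.
split=> u; rewrite size_drop => ltu.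
  by have := inc (t.+1 + u) ltac:(lia); have := ltj u ltac:(lia); rewrite -addnS; lia.
have := ltj u ltu; have [ltS Sj] := at_ (t.+1 + u) ltac:(lia) => ltj'.
by rewrite size_drop !onth_drop subnKC // Sj; split=> //; lia.
Qed.

Lemma occurrence_subseq C S j : occurrence C S j -> subseq C S.
Proof.
elim: C S j => [|x C IH] S j occ; first exact: sub0seq.
have [ltS Sj0] := occ.2 0 isT.
have := occurrence_drop (t := 0) occ isT; rewrite /= drop0 => /IH subC.
rewrite -(take_onth_drop Sj0); apply: subseq_trans (suffix_subseq _ _).
by rewrite /= eqxx.
Qed.

Lemma subseq_occurrence C S : subseq C S -> exists j, occurrence C S j.
Proof.
elim: S C => [|y S IH] [|x C] //=; try by exists id; split.
case: eqP => [<- /IH [j occ]|_ /IH [j occ]]; eexists.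
  exact: occurrence_cat (occurrence1 x) occ.
exact: occurrence_cat (occurrence_nil [:: y] id) occ.
Qed.

Lemma occurrenceP C S : reflect (exists j, occurrence C S j) (subseq C S).
Proof.
by apply: (iffP idP) => [/subseq_occurrence|[j /occurrence_subseq]].
Qed.

Definition cover_at C S i t :=
  [&& onth C t == onth S i, subseq (take t C) (take i S)
    & subseq (drop t.+1 C) (drop i.+1 S)].

Lemma cover_atP C S i t : i < size S -> t < size C ->
  reflect (exists2 j, occurrence C S j & j t = i) (cover_at C S i t).
Proof.
move=> ltiS lttC; apply: (iffP and3P) => [[/eqP Ct /occurrenceP[j1 occ1]]|].
  case/occurrenceP=> j2 occ2.
  case Cx: (onth C t) Ct => [x|] Si; last by move: lttC; rewrite -onthTE Cx.
  rewrite -(take_onth_drop Cx) -(take_onth_drop (esym Si)).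
  eexists; first exact: occurrence_cat occ1 (occurrence_cat (occurrence1 x) occ2).
  by rewrite !size_takel ?ltnn ?subnn ?(ltnW lttC) ?(ltnW ltiS) // addn0.
move=> [j occ <-]; split.
- by rewrite (occ.2 t lttC).2.
- by apply/occurrenceP; exists j; apply: occurrence_take.
- by apply/occurrenceP; eexists; apply: occurrence_drop.
Qed.

Definition s_coverb C S :=
  all (fun i => has (cover_at C S i) (iota 0 (size C))) (iota 0 (size S)).

Lemma s_coverP C S : reflect (s_cover C S) (s_coverb C S).
Proof.
apply: (iffP allP) => [covb i ltiS | cov i].
  have /hasP[t] := covb i ltac:(by rewrite mem_iota).
  rewrite mem_iota => lttC /(cover_atP ltiS lttC)[j occ jt].
  by exists j; split=> //; exists t.
rewrite mem_iota => ltiS; have [j [occ [t lttC jt]]] := cov i ltiS.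
by apply/hasP; exists t; rewrite ?mem_iota //; apply/cover_atP; last exists j.
Qed.
End Occurrence.

Section SCover.
Variable T : eqType.
Implicit Types (C S U V X w : seq T) (x : T).

Lemma s_cover_refl S : s_cover S S.
Proof. by move=> i ltiS; exists id; split; [split | exists i]. Qed.
Arguments s_cover_refl : clear implicits.

Lemma s_cover_subseq C S : s_cover C S -> 0 < size S -> subseq C S.
Proof. by move=> cov /cov[j [/occurrence_subseq]]. Qed.

Lemma s_cover_cat C1 S1 C2 S2 :
  subseq C1 S1 -> subseq C2 S2 -> s_cover C1 S1 -> s_cover C2 S2 ->
  s_cover (C1 ++ C2) (S1 ++ S2).
Proof.
move=> /occurrenceP[j1 occ1] /occurrenceP[j2 occ2] cov1 cov2 i.
rewrite size_cat => ltiS; case: (ltnP i (size S1)) => [lti|lei].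
  have [k [occk [t lttC kt]]] := cov1 i lti.
  eexists; split; first exact: occurrence_cat occk occ2.
  by exists t; rewrite ?size_cat ?lttC ?ltn_addr.
have [k [occk [t lttC kt]]] := cov2 (i - size S1) ltac:(lia).
eexists; split; first exact: occurrence_cat occ1 occk.
exists (size C1 + t); first by rewrite size_cat ltn_add2l.
by rewrite ltnNge leq_addr addKn kt subnKC.
Qed.

Lemma s_cover_square U x V : s_cover (U ++ x :: V) (U ++ x :: x :: V).
Proof.
have cov_xx : s_cover [:: x] [:: x; x].
  by apply/s_coverP; rewrite /s_coverb /cover_at /= eqxx.
apply: s_cover_cat (subseq_refl U) _ (s_cover_refl U) _.
  exact: suffix_subseq [:: x] (x :: V).
exact: (s_cover_cat (C1 := [:: x]) (S1 := [:: x; x])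
          (subseq_cons _ _) (subseq_refl V) cov_xx (s_cover_refl V)).
Qed.

Lemma square_not_s_primitive w : ~~ sorted [rel x y | x != y] w -> ~ s_primitive w.
Proof.
move=> sq; have [U [x [V ->]]] : exists U x V, w = U ++ x :: x :: V.
  elim: w sq => // a [|b w] IH //=; case: eqP => [<- _|_ /IH[U [x [V ->]]]].
    by exists [::], a, w.
  by exists (a :: U), x, V.
move=> prim; apply: prim; exists (U ++ x :: V); split; first exact: s_cover_square.
by rewrite !size_cat /=; lia.
Qed.

Lemma s_primitive_prefix S X : s_primitive (S ++ X) -> s_primitive S.
Proof.
move=> prim [C [cov ltCS]]; apply: prim; exists (C ++ X).
split; last by rewrite !size_cat ltn_add2r.
have subCS := s_cover_subseq cov (leq_ltn_trans (leq0n _) ltCS).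
exact: s_cover_cat subCS (subseq_refl X) cov (s_cover_refl X).
Qed.
End SCover.

Lemma s_primitive_map (T1 T2 : eqType) (g : T1 -> T2) (S : seq T1) :
  {in S &, injective g} -> s_primitive S -> s_primitive (map g S).
Proof.
move=> g_inj prim [C' [cov ltCS]]; rewrite size_map in ltCS.
have /subseqP[m _ defC'] := s_cover_subseq cov ltac:(by rewrite size_map; lia).
rewrite defC' -map_mask size_map in cov ltCS; apply: prim; exists (mask m S).
split=> // i ltiS; have := cov i ltac:(by rewrite size_map).
rewrite /occurrence !size_map => -[j [[inc at_] jt]].
exists j; split=> //; split=> // t ltt.
have [ltS eqS] := at_ t ltt; split=> //; move: eqS; rewrite !onth_map.
case Sx: (onth S (j t)) => [x|] in ltS *; last by move: ltS; rewrite -onthTE Sx.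
case My: (onth (mask m S) t) => [y|] //= [gxy].
congr Some; apply: g_inj gxy; first by apply/onthP; exists (j t).
by apply: (@mem_mask _ _ m); apply/onthP; exists t.
Qed.

Section Decision.
Variable T : eqType.
Implicit Types (C S : seq T).

Fixpoint subseqs S : seq (seq T) :=
  if S is x :: S' then [seq x :: C | C <- subseqs S'] ++ subseqs S' else [:: [::]].

Lemma mem_subseqs C S : subseq C S -> C \in subseqs S.
Proof.
elim: S C => [|y S IH] [|x C] //=; rewrite mem_cat.
  by move=> _; rewrite IH ?orbT ?sub0seq.
by case: eqP => [-> /IH|_ /IH ->]; rewrite ?orbT // => /(map_f (cons y)) ->.
Qed.

Definition s_primitiveb S :=
  ~~ has (fun C => (size C < size S) && s_coverb C S) (subseqs S).

Lemma s_primitiveP S : reflect (s_primitive S) (s_primitiveb S).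
Proof.
apply: (iffP hasPn) => [noC [C [cov ltCS]] | prim C _].
  have /mem_subseqs := s_cover_subseq cov (leq_ltn_trans (leq0n _) ltCS).
  by move/noC; rewrite ltCS (introT (s_coverP _ _) cov).
by apply/negP => /andP[ltCS /s_coverP cov]; apply: prim; exists C.
Qed.
End Decision.

Fixpoint ternary_words n : seq (seq nat) :=
  if n is n'.+1 then [seq x :: w | x <- iota 0 3, w <- ternary_words n'] else [:: [::]].

Lemma mem_ternary_words w : all (fun x => x < 3) w -> w \in ternary_words (size w).
Proof.
elim: w => [//|x w IH] /andP[ltx /IH w3].
by apply: allpairs_f w3; rewrite mem_iota.
Qed.

(* [find] rather than [has], so that [vm_compute] stops at the first cover found. *)
Lemma square_free_ternary_words9_not_s_primitive :
  all (fun w => ~~ s_primitiveb w)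
    [seq w <- ternary_words 9 | sorted [rel x y | x != y] w].
Proof.
have covers_found : all (fun w =>
    find (fun C => (size C < size w) && s_coverb C w) (subseqs w) < size (subseqs w))
  [seq w <- ternary_words 9 | sorted [rel x y | x != y] w] by vm_compute.
by apply: sub_all covers_found => w; rewrite /s_primitiveb negbK has_find.
Qed.

Lemma ternary_word9_not_s_primitive w :
  size w = 9 -> all (fun x => x < 3) w -> ~ s_primitive w.
Proof.
move=> w9 w3; have [sq|] := boolP (sorted [rel x y | x != y] w); last first.
  exact: square_not_s_primitive.
move/s_primitiveP; apply/negP/(allP square_free_ternary_words9_not_s_primitive).
by rewrite mem_filter sq -w9 mem_ternary_words.
Qed.

Lemma word9_not_s_primitive (T : finType) (w : seq T) :
  #|T| = 3 -> size w = 9 -> ~ s_primitive w.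
Proof.
move=> card3 w9 prim; pose rank (x : T) : nat := enum_rank x.
have rank_inj : injective rank by move=> x y /val_inj/enum_rank_inj.
apply: (ternary_word9_not_s_primitive (w := map rank w)).
- by rewrite size_map.
- by apply/allP => _ /mapP[x _ ->]; rewrite /rank -card3 ltn_ord.
- exact: s_primitive_map (in2W rank_inj) prim.
Qed.

Lemma s_primitive_abcabacb (T : eqType) (a b c : T) :
  a != b -> b != c -> a != c -> s_primitive [:: a; b; c; a; b; a; c; b].
Proof.
move=> ab bc ac; set w := [:: 0; 1; 2; 0; 1; 0; 2; 1].
have w_prim : s_primitive w by apply/s_primitiveP; vm_compute.
have letter_inj : {in w &, injective (nth c [:: a; b])}.
  by move=> [|[|[|x]]] [|[|[|y]]] //= _ _ exy; move: ab bc ac; rewrite exy eqxx.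
exact: s_primitive_map letter_inj w_prim.
Qed.

Theorem mainTheorem5 :
  gamma_is 3 8 /\
  (forall (T : eqType) (a b c : T), a != b -> b != c -> a != c ->
     s_primitive [:: a; b; c; a; b; a; c; b]) /\
  (forall (T : finType) (w : seq T), #|T| = 3 -> size w = 9 -> ~ s_primitive w).
Proof.
split; last by split; [exact: s_primitive_abcabacb | exact: word9_not_s_primitive].
split.
  exists [:: ord0; inord 1; ord_max; ord0; inord 1; ord0; ord_max; inord 1 : 'I_3].
  by split=> //; apply: s_primitive_abcabacb; rewrite -val_eqE /= ?inordK.
move=> w prim; rewrite leqNgt; apply/negP => w9.
apply: (word9_not_s_primitive (w := take 9 w) (card_ord 3)); first by rewrite size_takel.
by apply: (s_primitive_prefix (X := drop 9 w)); rewrite cat_take_drop.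
Qed.
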